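(* Consider a system of $M$ conservation laws with state space $\mathcal D\subset\mathbb R^M$, entropy variables $\mathbf v=(v^1,\dots,v^M):\mathcal D\to\mathbb R^M$, entropy flux potential $\Psi:\mathcal D\to\mathbb R$, and an entropy conservative two-point flux $\mathbf f^{\mathrm{EC}}=(f^{\mathrm{EC},1},\dots,f^{\mathrm{EC},M}):\mathcal D\times\mathcal D\to\mathbb R^M$, i.e. $(\mathbf v(\mathbf u_R)-\mathbf v(\mathbf u_L))^T\mathbf f^{\mathrm{EC}}(\mathbf u_L,\mathbf u_R)=\Psi(\mathbf u_R)-\Psi(\mathbf u_L)$ for all $\mathbf u_L,\mathbf u_R$. Let an element $R$ with $N_R+1$ interface nodes, diagonal positive weight matrix $\mathbf M_R$ and edge length $\Delta_R>0$ share its edge with $E\ge1$ elements $L_1,\dots,L_E$, where $L_i$ has $N_{L_i}+1$ interface nodes, diagonal positive weight matrix $\mathbf M_{L_i}$ and edge length $\Delta_{L_i}>0$, $\sum_i\Delta_{L_i}=\Delta_R$. Let $\mathbf P_{L_i2R}\in\mathbb R^{(N_R+1)\times(N_{L_i}+1)}$, $\mathbf P_{R2L_i}\in\mathbb R^{(N_{L_i}+1)\times(N_R+1)}$ satisfy $$\Delta_{L_i}\mathbf P_{R2L_i}^T\mathbf M_{L_i}=\Delta_R\mathbf M_R\mathbf P_{L_i2R},\qquad \mathbf P_{R2L_i}\mathbf 1^R=\mathbf 1^{L_i}\quad(i=1,\dots,E),\qquad \sum_{i=1}^E\mathbf P_{L_i2R}\mathbf 1^{L_i}=\mathbf 1^R.$$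 Given arbitrary states $\mathbf U^{L_i}_k\in\mathcal D$ ($k=0,\dots,N_{L_i}$) and $\mathbf U^R_j\in\mathcal D$ ($j=0,\dots,N_R$), define for $q=1,\dots,M$ the matrices $[\mathbf F^q_{L_i,R}]_{kj}=f^{\mathrm{EC},q}(\mathbf U^{L_i}_k,\mathbf U^R_j)$ and the surface fluxes $$\mathbf F^{q,R}:=\sum_{i=1}^E\mathbb E\big(\mathbf P_{L_i2R}\mathbf F^q_{L_i,R}\big),\qquad \mathbf F^{q,L_i}:=\mathbb E\big(\mathbf P_{R2L_i}(\mathbf F^q_{L_i,R})^T\big).$$ With $V^{q,L_i}_k=v^q(\mathbf U^{L_i}_k)$, $\Psi^{L_i}_k=\Psi(\mathbf U^{L_i}_k)$, $V^{q,R}_j=v^q(\mathbf U^R_j)$, $\Psi^R_j=\Psi(\mathbf U^R_j)$, one has for every $q$ $$\Delta U^q:=\Delta_R(\mathbf 1^R)^T\mathbf M_R\mathbf F^{q,R}-\sum_{i=1}^E\Delta_{L_i}(\mathbf 1^{L_i})^T\mathbf M_{L_i}\mathbf F^{q,L_i}=0$$ and $$\Delta S:=\Delta_R\Big(\sum_{q=1}^M(\mathbf V^{q,R})^T\mathbf M_R\mathbf F^{q,R}-(\mathbf 1^R)^T\mathbf M_R\boldsymbol\Psi^R\Big)-\sum_{i=1}^E\Delta_{L_i}\Big(\sum_{q=1}^M(\mathbf V^{q,L_i})^T\mathbf M_{L_i}\mathbf F^{q,L_i}-(\mathbf 1^{L_i})^T\mathbf M_{L_i}\boldsymbol\Psi^{L_i}\Big)=0,$$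 i.e. the fluxes are primary and entropy conservative.
   Context: Setting: a nodal discontinuous Galerkin spectral element method on Legendre–Gauss–Lobatto nodes (summation-by-parts operators) on a rectangular mesh with hanging nodes ($h$ refinement) and possibly differing polynomial degrees; a hyperbolic system with strongly convex entropy $S$, entropy variables $\mathbf v=\partial S/\partial\mathbf u$, entropy flux $F$, and potential $\Psi=\mathbf v\cdot\mathbf f-F$ where $\mathbf f$ is the interface-normal flux. Here one large element $R$ is adjacent across one edge to $E$ smaller elements $L_1,\dots,L_E$ stacked along that edge. $\Delta U^q$ and $\Delta S$ are (up to a common positive factor) the contributions of this interface to the time rate of change of the total integral of the $q$-th conserved variable and of the total entropy when entropy conservative volume fluxes are used; ''primary and entropy conservative'' means they vanish. Notation: $\mathbb E(\mathbf W)$ is the vector of diagonal entries of a square matrix $\mathbf W$; $\mathbf 1^R,\mathbf 1^{L_i}$ are all-ones vectors of the appropriate sizes. *)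

From HB Require Import structures.
From mathcomp Require Import all_boot all_order all_algebra.
Set Implicit Arguments. Unset Strict Implicit. Unset Printing Implicit Defensive.
Import Order.TTheory GRing.Theory Num.Theory.
Local Open Scope ring_scope.

(* E(W): column vector of the diagonal entries of a square matrix W *)
Definition diagv (R : nzRingType) (n : nat) (W : 'M[R]_n) : 'cV[R]_n :=
  \col_(j < n) W j j.

Definition ones (R : nzRingType) (n : nat) : 'cV[R]_n := const_mx 1.

Definition pos_diag (R : numDomainType) (n : nat) (W : 'M[R]_n) : Prop :=
  is_diag_mx W /\ forall j, 0 < W j j.

From HB Require Import structures.
From mathcomp Require Import all_boot all_order all_algebra.
From mathcomp Require Import ring.
Set Implicit Arguments. Unset Strict Implicit. Unset Printing Implicit Defensive.
Import Order.TTheory GRing.Theory Num.Theory.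
Local Open Scope ring_scope.

(* By the SBP relation, C_i := DR MR PL2R_i = DL_i PR2L_i^T ML_i is one matrix
   coupling the nodes j of R with the nodes k of L_i.  Both the R-side and the
   L_i-side surface integrals of the mortar fluxes equal the C-weighted sum of
   the two-point fluxes f(U^{L_i}_k, U^R_j); the consistency conditions turn the
   potential terms into C-weighted sums as well.  Hence Delta U^q and Delta S are
   sums over (i, j, k) of C_ijk times, respectively, 0 and
   (v(U^R_j) - v(U^{L_i}_k)) . f - (Psi(U^R_j) - Psi(U^{L_i}_k)), which vanishes
   by entropy conservation of f. *)

Section DiagonalForms.
Variable R : nzRingType.

Lemma diag_mulmxE n m (W : 'M[R]_n) (A : 'M[R]_(n, m)) j k :
  is_diag_mx W -> (W *m A) j k = W j j * A j k.
Proof. by case/diag_mxP=> d ->; rewrite mul_diag_mx !mxE eqxx mulr1n. Qed.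

Lemma mulmx_diagE n m (A : 'M[R]_(n, m)) (W : 'M[R]_m) j k :
  is_diag_mx W -> (A *m W) j k = A j k * W k k.
Proof. by case/diag_mxP=> d ->; rewrite mul_mx_diag !mxE eqxx mulr1n. Qed.

Lemma diag_formE n (W : 'M[R]_n) (u x : 'cV[R]_n) : is_diag_mx W ->
  (u^T *m W *m x) 0 0 = \sum_j u j 0 * W j j * x j 0.
Proof.
by move=> Wd; rewrite mxE; apply: eq_bigr => j _; rewrite mulmx_diagE // mxE.
Qed.

Lemma diagv_mulmxE n m (A : 'M[R]_(n, m)) (B : 'M[R]_(m, n)) j :
  diagv (A *m B) j 0 = \sum_k A j k * B k j.
Proof. by rewrite !mxE. Qed.

End DiagonalForms.

Section MortarCoupling.
Variables (R : comNzRingType) (E nR : nat) (nL : 'I_E -> nat).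
Variables (MR : 'M[R]_nR) (ML : forall i, 'M[R]_(nL i)) (DR : R) (DL : 'I_E -> R).
Variables (PL2R : forall i, 'M[R]_(nR, nL i)) (PR2L : forall i, 'M[R]_(nL i, nR)).
Hypotheses (MR_diag : is_diag_mx MR) (ML_diag : forall i, is_diag_mx (ML i)).
Hypothesis sbp : forall i, DL i *: ((PR2L i)^T *m ML i) = DR *: (MR *m PL2R i).

Definition coupling i : 'M[R]_(nR, nL i) := DR *: (MR *m PL2R i).

Lemma couplingER i j k : coupling i j k = DR * (MR j j * PL2R i j k).
Proof. by rewrite mxE diag_mulmxE. Qed.

Lemma couplingEL i j k : coupling i j k = DL i * (PR2L i k j * ML i k k).
Proof. by rewrite /coupling -sbp mxE mulmx_diagE // mxE. Qed.

Lemma coupling_fluxR (u : 'cV_nR) (G : forall i, 'M[R]_(nL i, nR)) :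
  DR * (u^T *m MR *m \sum_i diagv (PL2R i *m G i)) 0 0 =
  \sum_i \sum_j \sum_k coupling i j k * (u j 0 * G i k j).
Proof.
rewrite diag_formE // mulr_sumr exchange_big /=; apply: eq_bigr => j _.
rewrite summxE !mulr_sumr; apply: eq_bigr => i _.
rewrite diagv_mulmxE !mulr_sumr; apply: eq_bigr => k _.
by rewrite couplingER; ring.
Qed.

Lemma coupling_fluxL i (w : 'cV_(nL i)) (G : 'M[R]_(nL i, nR)) :
  DL i * (w^T *m ML i *m diagv (PR2L i *m G^T)) 0 0 =
  \sum_j \sum_k coupling i j k * (w k 0 * G k j).
Proof.
rewrite diag_formE // mulr_sumr exchange_big /=; apply: eq_bigr => k _.
rewrite diagv_mulmxE !mulr_sumr; apply: eq_bigr => j _.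
by rewrite couplingEL mxE; ring.
Qed.

Lemma coupling_flux_balance (u : 'cV_nR) (w : forall i, 'cV_(nL i))
    (G : forall i, 'M[R]_(nL i, nR)) :
  DR * (u^T *m MR *m \sum_i diagv (PL2R i *m G i)) 0 0
  - \sum_i DL i * ((w i)^T *m ML i *m diagv (PR2L i *m (G i)^T)) 0 0 =
  \sum_i \sum_j \sum_k coupling i j k * ((u j 0 - w i k 0) * G i k j).
Proof.
rewrite coupling_fluxR (eq_bigr _ (fun i _ => coupling_fluxL (w i) (G i))).
rewrite -sumrB; apply: eq_bigr => i _; rewrite -sumrB; apply: eq_bigr => j _.
by rewrite -sumrB; apply: eq_bigr => k _; rewrite -mulrBr mulrBl.
Qed.

Hypothesis L2R_ones : \sum_i PL2R i *m ones R (nL i) = ones R nR.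
Hypothesis R2L_ones : forall i, PR2L i *m ones R nR = ones R (nL i).

Lemma L2R_row_sum j : \sum_i \sum_k PL2R i j k = 1.
Proof.
have /matrixP/(_ j 0) := L2R_ones; rewrite summxE mxE => <-.
by apply: eq_bigr => i _; rewrite mxE; apply: eq_bigr => k _; rewrite mxE mulr1.
Qed.

Lemma R2L_row_sum i k : \sum_j PR2L i k j = 1.
Proof.
have /matrixP/(_ k 0) := R2L_ones i; rewrite !mxE => <-.
by apply: eq_bigr => j _; rewrite mxE mulr1.
Qed.

Lemma coupling_massR (x : 'cV_nR) :
  DR * ((ones R nR)^T *m MR *m x) 0 0 =
  \sum_i \sum_j \sum_k coupling i j k * x j 0.
Proof.
rewrite diag_formE // mulr_sumr exchange_big /=; apply: eq_bigr => j _.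
rewrite mxE mul1r -[LHS]mulr1 -(L2R_row_sum j) !mulr_sumr; apply: eq_bigr => i _.
by rewrite !mulr_sumr; apply: eq_bigr => k _; rewrite couplingER; ring.
Qed.

Lemma coupling_massL i (y : 'cV_(nL i)) :
  DL i * ((ones R (nL i))^T *m ML i *m y) 0 0 =
  \sum_j \sum_k coupling i j k * y k 0.
Proof.
rewrite diag_formE // mulr_sumr exchange_big /=; apply: eq_bigr => k _.
rewrite mxE mul1r -[LHS]mulr1 -(R2L_row_sum k) !mulr_sumr; apply: eq_bigr => j _.
by rewrite couplingEL; ring.
Qed.

Lemma coupling_mass_balance (x : 'cV_nR) (y : forall i, 'cV_(nL i)) :
  DR * ((ones R nR)^T *m MR *m x) 0 0
  - \sum_i DL i * ((ones R (nL i))^T *m ML i *m y i) 0 0 =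
  \sum_i \sum_j \sum_k coupling i j k * (x j 0 - y i k 0).
Proof.
rewrite coupling_massR (eq_bigr _ (fun i _ => coupling_massL (y i))).
rewrite -sumrB; apply: eq_bigr => i _; rewrite -sumrB; apply: eq_bigr => j _.
by rewrite -sumrB; apply: eq_bigr => k _; rewrite mulrBr.
Qed.

End MortarCoupling.

Theorem corollary1 (R : realFieldType) (M : nat)
  (D : pred 'rV[R]_M) (v : 'rV[R]_M -> 'rV[R]_M) (Psi : 'rV[R]_M -> R)
  (fEC : 'rV[R]_M -> 'rV[R]_M -> 'rV[R]_M)
  (hEC : forall uL uR, D uL -> D uR ->
     \sum_(q < M) (v uR 0 q - v uL 0 q) * fEC uL uR 0 q = Psi uR - Psi uL)
  (E : nat) (hE : (0 < E)%N)
  (NR : nat) (MR : 'M[R]_NR.+1) (DR : R)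
  (NL : 'I_E -> nat) (ML : forall i, 'M[R]_((NL i).+1)) (DL : 'I_E -> R)
  (hMR : pos_diag MR) (hML : forall i, pos_diag (ML i))
  (hDR : 0 < DR) (hDL : forall i, 0 < DL i)
  (hDsum : \sum_(i < E) DL i = DR)
  (PL2R : forall i, 'M[R]_(NR.+1, (NL i).+1))
  (PR2L : forall i, 'M[R]_((NL i).+1, NR.+1))
  (hSBP : forall i, DL i *: ((PR2L i)^T *m ML i) = DR *: (MR *m PL2R i))
  (hR2L : forall i, PR2L i *m ones R NR.+1 = ones R (NL i).+1)
  (hL2R : \sum_(i < E) PL2R i *m ones R (NL i).+1 = ones R NR.+1)
  (UL : forall i, 'I_((NL i).+1) -> 'rV[R]_M) (UR : 'I_NR.+1 -> 'rV[R]_M)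
  (hUL : forall i k, D (UL i k)) (hUR : forall j, D (UR j)) :
  let F := fun (q : 'I_M) (i : 'I_E) =>
    \matrix_(k < (NL i).+1, j < NR.+1) fEC (UL i k) (UR j) 0 q in
  let FR := fun q => \sum_(i < E) diagv (PL2R i *m F q i) in
  let FL := fun q i => diagv (PR2L i *m (F q i)^T) in
  let VR := fun (q : 'I_M) => \col_(j < NR.+1) v (UR j) 0 q in
  let VL := fun (q : 'I_M) i => \col_(k < (NL i).+1) v (UL i k) 0 q in
  let PsiR := \col_(j < NR.+1) Psi (UR j) in
  let PsiL := fun i => \col_(k < (NL i).+1) Psi (UL i k) in
  (forall q : 'I_M,
     DR * ((ones R NR.+1)^T *m MR *m FR q) 0 0
     - \sum_(i < E) DL i * ((ones R (NL i).+1)^T *m ML i *m FL q i) 0 0 = 0)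
  /\
  DR * (\sum_(q < M) ((VR q)^T *m MR *m FR q) 0 0
        - ((ones R NR.+1)^T *m MR *m PsiR) 0 0)
  - \sum_(i < E) DL i * (\sum_(q < M) ((VL q i)^T *m ML i *m FL q i) 0 0
        - ((ones R (NL i).+1)^T *m ML i *m PsiL i) 0 0) = 0.
Proof.
move=> F FR FL VR VL PsiR PsiL.
have MR_diag := proj1 hMR; have ML_diag i := proj1 (hML i).
have flux := coupling_flux_balance MR_diag ML_diag hSBP.
have mass := coupling_mass_balance MR_diag ML_diag hSBP hL2R hR2L.
split=> [q|].
  rewrite /FR /FL (flux _ (fun i => ones R (NL i).+1)).
  by do 3!apply: big1 => ? _; rewrite !mxE subrr mul0r mulr0.
transitivity (\sum_q (DR * ((VR q)^T *m MR *m FR q) 0 0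
                      - \sum_i DL i * ((VL q i)^T *m ML i *m FL q i) 0 0)
  - (DR * ((ones R NR.+1)^T *m MR *m PsiR) 0 0
     - \sum_i DL i * ((ones R (NL i).+1)^T *m ML i *m PsiL i) 0 0)).
  under [X in _ - X]eq_bigr => i _ do rewrite mulrBr mulr_sumr.
  by rewrite mulrBr mulr_sumr !sumrB exchange_big /=; ring.
rewrite (mass PsiR PsiL); under eq_bigr => q _ do rewrite /FR /FL flux.
rewrite exchange_big -sumrB; apply: big1 => i _.
rewrite exchange_big -sumrB; apply: big1 => j _.
rewrite exchange_big -sumrB; apply: big1 => k _.
rewrite -mulr_sumr -mulrBr; under eq_bigr => q _ do rewrite !mxE.
by rewrite hEC // !mxE subrr mulr0.
Qed.
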